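(* Let $E$ be a pseudo effect algebra satisfying (RDP). Then $\mathcal J(E)$ is an Abelian Dedekind complete lattice-ordered real vector space (Riesz space) under $\le^+$, and for any $m_1,\dots,m_n\in\mathcal J(E)$ and every $x\in E$: $$\Big(\bigvee_{i=1}^n m_i\Big)(x)=\sup\{m_1(x_1)+\cdots+m_n(x_n):\ x=x_1+\cdots+x_n,\ x_1,\dots,x_n\in E\},$$ $$\Big(\bigwedge_{i=1}^n m_i\Big)(x)=\inf\{m_1(x_1)+\cdots+m_n(x_n):\ x=x_1+\cdots+x_n,\ x_1,\dots,x_n\in E\}.$$
   Context: Pseudo effect algebra: partial algebra $(E;+,0,1)$ such that for all $a,b,c$: (i) $a+b$ and $(a+b)+c$ exist iff $b+c$ and $a+(b+c)$ exist, and then they are equal; (ii) there is exactly one $d$ and one $e$ with $a+d=e+a=1$; (iii) if $a+b$ exists there are $d,e$ with $a+b=d+a=b+e$; (iv) if $1+a$ or $a+1$ exists then $a=0$. (RDP): whenever $a_1+a_2=b_1+b_2$ there are $d_1,\dots,d_4$ with $d_1+d_2=a_1$, $d_3+d_4=a_2$, $d_1+d_3=b_1$, $d_2+d_4=b_2$. A signed measure is $m:E\to\mathbb R$ additive on defined sums; a measure is a nonnegative signed measure; $m_1\le^+m_2$ iff $m_2-m_1$ is a measure. $\mathcal J(E)$ is the set of signed measures that are differences of two measures, with pointwise operations. *)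

From Stdlib Require Import Reals.
Open Scope R_scope.

Section PEA.
Variable E : Type.
Variable add : E -> E -> option E.   (* partial operation + ; None = undefined *)
Variables zero one : E.

Definition obind (o : option E) (f : E -> option E) : option E :=
  match o with Some a => f a | None => None end.

Definition is_PEA : Prop :=
  (* (i): (a+b)+c defined iff a+(b+c) defined, and then equal *)
  (forall a b c, obind (add a b) (fun ab => add ab c)
              = obind (add b c) (fun bc => add a bc)) /\
  (forall a, (exists! d, add a d = Some one) /\ (exists! e, add e a = Some one)) /\
  (forall a b s, add a b = Some s ->
      exists d e, add d a = Some s /\ add b e = Some s) /\
  (forall a, ((exists s, add one a = Some s) \/ (exists s, add a one = Some s)) ->
      a = zero).

Definition RDP : Prop :=
  forall a1 a2 b1 b2 s, add a1 a2 = Some s -> add b1 b2 = Some s ->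
    exists d1 d2 d3 d4,
      add d1 d2 = Some a1 /\ add d3 d4 = Some a2 /\
      add d1 d3 = Some b1 /\ add d2 d4 = Some b2.

Definition signed_measure (m : E -> R) : Prop :=
  forall a b s, add a b = Some s -> m s = m a + m b.

Definition measure (m : E -> R) : Prop :=
  signed_measure m /\ forall x, 0 <= m x.

Definition le_plus (m1 m2 : E -> R) : Prop :=
  measure (fun x => m2 x - m1 x).

Definition inJ (m : E -> R) : Prop :=
  exists m1 m2, measure m1 /\ measure m2 /\ forall x, m x = m1 x - m2 x.

Fixpoint sumE (xs : nat -> E) (n : nat) : option E :=
  match n with
  | O => Some zero
  | S k => obind (sumE xs k) (fun s => add s (xs k))
  end.

End PEA.
Arguments is_PEA {E}. Arguments RDP {E}. Arguments signed_measure {E}.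
Arguments measure {E}. Arguments le_plus {E}. Arguments inJ {E}. Arguments sumE {E}. Arguments obind {E}.

Fixpoint rsum (f : nat -> R) (n : nat) : R :=
  match n with O => 0 | S k => rsum f k + f k end.

Definition is_glb (P : R -> Prop) (g : R) : Prop :=
  (forall r, P r -> g <= r) /\ (forall b, (forall r, P r -> b <= r) -> b <= g).

Definition is_sup_J {E} (add : E -> E -> option E) (S : (E -> R) -> Prop)
  (s : E -> R) : Prop :=
  inJ add s /\ (forall m, S m -> le_plus add m s) /\
  (forall u, inJ add u -> (forall m, S m -> le_plus add m u) -> le_plus add s u).

Definition is_inf_J {E} (add : E -> E -> option E) (S : (E -> R) -> Prop)
  (s : E -> R) : Prop :=
  inJ add s /\ (forall m, S m -> le_plus add s m) /\
  (forall u, inJ add u -> (forall m, S m -> le_plus add u m) -> le_plus add u s).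

Definition decomp_values {E} (add : E -> E -> option E) (zero : E)
  (ms : nat -> E -> R) (n : nat) (x : E) : R -> Prop :=
  fun r => exists xs : nat -> E,
    sumE add zero xs n = Some x /\ r = rsum (fun i => ms i (xs i)) n.

From Stdlib Require Import Reals Lra Lia FunctionalExtensionality.
Open Scope R_scope.

(* Under [<=+] the signed measures form a pointwise-ordered real vector space, since a
   difference of signed measures is again signed.  The join of [m1] and [m2] is the
   pointwise supremum [j] of [m1 a + m2 b] over all decompositions [x = a + b].  For
   [s = x + y], the RDP refines a decomposition [s = u + v] along [x + y], giving
   [j s <= j x + j y]; conversely axiom (iii) merges decompositions of [x] and of [y]
   into one of [s], giving [j x + j y <= j s].  Finite joins follow by induction, a
   bounded set has as supremum the pointwise supremum of its closure under binary joins
   (a directed family of signed measures has an additive pointwise supremum), and meets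
   are obtained by negation. *)

Lemma is_lub_ub (P : R -> Prop) l r : is_lub P l -> P r -> r <= l.
Proof. intros [Hub _] Hr. exact (Hub r Hr). Qed.

Lemma is_lub_least (P : R -> Prop) l b : is_lub P l -> (forall r, P r -> r <= b) -> l <= b.
Proof. intros [_ Hl] Hb. exact (Hl b Hb). Qed.

Lemma is_lub_ext (P Q : R -> Prop) l : (forall r, P r <-> Q r) -> is_lub P l -> is_lub Q l.
Proof.
  intros HPQ [Hub Hl]. split.
  - intros r Hr. apply Hub, HPQ, Hr.
  - intros b Hb. apply Hl. intros r Hr. apply Hb, HPQ, Hr.
Qed.

Lemma is_lub_singleton c : is_lub (fun r => r = c) c.
Proof.
  split.
  - intros r ->. lra.
  - intros b Hb. apply Hb. reflexivity.
Qed.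

Lemma pointwise_lub_exists {T : Type} (P : T -> R -> Prop) :
  (forall x, bound (P x)) -> (forall x, exists r, P x r) ->
  exists s : T -> R, forall x, is_lub (P x) (s x).
Proof.
  intros Hb Hne.
  exists (fun x => proj1_sig (completeness (P x) (Hb x) (Hne x))).
  intro x. exact (proj2_sig (completeness (P x) (Hb x) (Hne x))).
Qed.

Lemma is_lub_nested {A B : Type} (P : A -> B -> Prop) (V : A -> R -> Prop)
    (f : A -> R) (g : B -> R) l :
  (forall a, is_lub (V a) (f a)) ->
  is_lub (fun r => exists a b, P a b /\ r = f a + g b) l ->
  is_lub (fun r => exists a b, P a b /\ exists v, V a v /\ r = v + g b) l.
Proof.
  intros Hf Hl. split.
  - intros r [a [b [Hab [v [Hv ->]]]]].
    pose proof (is_lub_ub _ _ _ (Hf a) Hv).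
    assert (f a + g b <= l) by (apply (is_lub_ub _ _ _ Hl); eauto). lra.
  - intros c Hc. apply (is_lub_least _ _ _ Hl). intros r [a [b [Hab ->]]].
    enough (f a <= c - g b) by lra.
    apply (is_lub_least _ _ _ (Hf a)). intros v Hv.
    enough (v + g b <= c) by lra. apply Hc. eauto 6.
Qed.

Lemma is_glb_of_lub_opp (P : R -> Prop) l : is_lub (fun r => P (- r)) l -> is_glb P (- l).
Proof.
  intros [Hub Hl]. split.
  - intros r Hr. enough (- r <= l) by lra. apply Hub. rewrite Ropp_involutive. exact Hr.
  - intros b Hb. enough (l <= - b) by lra. apply Hl. intros r Hr.
    enough (b <= - r) by lra. exact (Hb _ Hr).
Qed.

Section SignedMeasures.
Context {E : Type} (add : E -> E -> option E).

Lemma signed_measure_ext f g :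
  signed_measure add f -> (forall x, f x = g x) -> signed_measure add g.
Proof. intros Hf Hfg a b s Hab. rewrite <- !Hfg. exact (Hf _ _ _ Hab). Qed.

Lemma measure_ext f g : measure add f -> (forall x, f x = g x) -> measure add g.
Proof.
  intros [Hf Hf0] Hfg. split.
  - exact (signed_measure_ext f g Hf Hfg).
  - intro x. rewrite <- Hfg. apply Hf0.
Qed.

Lemma signed_measure_sub m1 m2 : signed_measure add m1 -> signed_measure add m2 ->
  signed_measure add (fun x => m1 x - m2 x).
Proof. intros H1 H2 a b s Hab. rewrite (H1 _ _ _ Hab), (H2 _ _ _ Hab). lra. Qed.

Lemma measure_add m1 m2 : measure add m1 -> measure add m2 ->
  measure add (fun x => m1 x + m2 x).
Proof.
  intros [H1 H10] [H2 H20]. split.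
  - intros a b s Hab. rewrite (H1 _ _ _ Hab), (H2 _ _ _ Hab). lra.
  - intro x. pose proof (H10 x). pose proof (H20 x). lra.
Qed.

Lemma measure_scale c m : 0 <= c -> measure add m -> measure add (fun x => c * m x).
Proof.
  intros Hc [Hm Hm0]. split.
  - intros a b s Hab. rewrite (Hm _ _ _ Hab). ring.
  - intro x. apply Rmult_le_pos; auto.
Qed.

Lemma inJ_signed_measure m : inJ add m -> signed_measure add m.
Proof.
  intros [p [q [[Hp _] [[Hq _] Hm]]]].
  apply (signed_measure_ext _ _ (signed_measure_sub p q Hp Hq)). intro x. now rewrite Hm.
Qed.

Lemma le_plus_le m1 m2 : le_plus add m1 m2 -> forall x, m1 x <= m2 x.
Proof. intros [_ H] x. specialize (H x). lra. Qed.

Lemma le_plus_of_le m1 m2 : signed_measure add m1 -> signed_measure add m2 ->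
  (forall x, m1 x <= m2 x) -> le_plus add m1 m2.
Proof.
  intros H1 H2 H. split.
  - exact (signed_measure_sub m2 m1 H2 H1).
  - intro x. specialize (H x). lra.
Qed.

Lemma le_plus_refl m : signed_measure add m -> le_plus add m m.
Proof. intro Hm. apply le_plus_of_le; auto. intro; lra. Qed.

Lemma le_plus_antisym m1 m2 :
  le_plus add m1 m2 -> le_plus add m2 m1 -> forall x, m1 x = m2 x.
Proof.
  intros H12 H21 x. pose proof (le_plus_le _ _ H12 x). pose proof (le_plus_le _ _ H21 x). lra.
Qed.

Lemma le_plus_trans m1 m2 m3 :
  le_plus add m1 m2 -> le_plus add m2 m3 -> le_plus add m1 m3.
Proof.
  intros H12 H23. apply (measure_ext _ _ (measure_add _ _ H12 H23)). intro; simpl; lra.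
Qed.

Lemma le_plus_add_r m1 m2 m3 : le_plus add m1 m2 ->
  le_plus add (fun x => m1 x + m3 x) (fun x => m2 x + m3 x).
Proof. intro H. apply (measure_ext _ _ H). intro; simpl; lra. Qed.

Lemma le_plus_scale c m1 m2 : 0 <= c -> le_plus add m1 m2 ->
  le_plus add (fun x => c * m1 x) (fun x => c * m2 x).
Proof. intros Hc H. apply (measure_ext _ _ (measure_scale c _ Hc H)). intro; simpl; ring. Qed.

Lemma inJ_zero : inJ add (fun _ => 0).
Proof.
  assert (H0 : measure add (fun _ => 0)) by (split; [intros a b s _|intros _]; lra).
  exists (fun _ => 0), (fun _ => 0). split; [exact H0|split; [exact H0|]]. intro; lra.
Qed.

Lemma inJ_add m1 m2 : inJ add m1 -> inJ add m2 -> inJ add (fun x => m1 x + m2 x).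
Proof.
  intros [p1 [q1 [Hp1 [Hq1 H1]]]] [p2 [q2 [Hp2 [Hq2 H2]]]].
  exists (fun x => p1 x + p2 x), (fun x => q1 x + q2 x).
  split; [|split]; [apply measure_add; auto ..|].
  intro x. rewrite H1, H2. lra.
Qed.

Lemma inJ_scale c m : inJ add m -> inJ add (fun x => c * m x).
Proof.
  intros [p [q [Hp [Hq H]]]]. destruct (Rle_dec 0 c) as [Hc|Hc].
  - exists (fun x => c * p x), (fun x => c * q x).
    split; [|split]; [apply measure_scale; auto ..|].
    intro x. rewrite H. ring.
  - exists (fun x => - c * q x), (fun x => - c * p x).
    split; [|split]; [apply measure_scale; auto; lra ..|].
    intro x. rewrite H. ring.
Qed.

Lemma inJ_of_le_plus m1 m2 : inJ add m1 -> signed_measure add m2 ->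
  le_plus add m1 m2 -> inJ add m2.
Proof.
  intros [p [q [Hp [Hq H]]]] _ H12.
  exists (fun x => p x + (m2 x - m1 x)), q.
  split; [apply measure_add; auto|split; auto].
  intro x. rewrite H. lra.
Qed.

Lemma inJ_summand_bound m : inJ add m -> exists p, measure add p /\
  forall a b x, add a b = Some x -> m a <= p x /\ m b <= p x.
Proof.
  intros [p [q [[Hp Hp0] [[Hq Hq0] Hm]]]]. exists p. split; [split; auto|].
  intros a b x H. rewrite !Hm, (Hp _ _ _ H).
  pose proof (Hp0 a); pose proof (Hp0 b); pose proof (Hq0 a); pose proof (Hq0 b). lra.
Qed.

Definition oppf (m : E -> R) : E -> R := fun x => - m x.

Lemma oppf_involutive m : oppf (oppf m) = m.
Proof. apply functional_extensionality. intro x. unfold oppf. lra. Qed.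

Lemma inJ_oppf m : inJ add m -> inJ add (oppf m).
Proof.
  intros [p [q [Hp [Hq H]]]]. exists q, p. split; [exact Hq|split; [exact Hp|]].
  intro x. unfold oppf. rewrite H. lra.
Qed.

Lemma le_plus_oppf m1 m2 : le_plus add m1 m2 -> le_plus add (oppf m2) (oppf m1).
Proof. intro H. apply (measure_ext _ _ H). intro; unfold oppf; lra. Qed.

Lemma is_sup_J_ext S S' s :
  (forall m, S m <-> S' m) -> is_sup_J add S s -> is_sup_J add S' s.
Proof.
  intros HS [Js [Ub Lub]]. split; [exact Js|split].
  - intros m Hm. apply Ub, HS, Hm.
  - intros u Ju Uu. apply Lub; auto. intros m Hm. apply Uu, HS, Hm.
Qed.

Lemma is_sup_J_unique S s1 s2 :
  is_sup_J add S s1 -> is_sup_J add S s2 -> forall x, s1 x = s2 x.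
Proof.
  intros [J1 [U1 L1]] [J2 [U2 L2]].
  apply le_plus_antisym; [apply L1 | apply L2]; auto.
Qed.

Lemma is_inf_J_unique S s1 s2 :
  is_inf_J add S s1 -> is_inf_J add S s2 -> forall x, s1 x = s2 x.
Proof.
  intros [J1 [U1 L1]] [J2 [U2 L2]].
  apply le_plus_antisym; [apply L2 | apply L1]; auto.
Qed.

Lemma is_inf_J_of_sup_oppf S t :
  is_sup_J add (fun m => S (oppf m)) t -> is_inf_J add S (oppf t).
Proof.
  intros [Jt [Ut Lt]]. split; [apply inJ_oppf; auto|split].
  - intros m Hm. rewrite <- (oppf_involutive m). apply le_plus_oppf, Ut.
    now rewrite oppf_involutive.
  - intros u Ju Uu. rewrite <- (oppf_involutive u). apply le_plus_oppf, Lt.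
    + apply inJ_oppf, Ju.
    + intros m Hm. rewrite <- (oppf_involutive m). apply le_plus_oppf, Uu, Hm.
Qed.

Lemma signed_measure_directed_sup (F : (E -> R) -> Prop) s :
  (forall v, F v -> signed_measure add v) ->
  (forall v1 v2, F v1 -> F v2 ->
     exists v, F v /\ (forall x, v1 x <= v x) /\ (forall x, v2 x <= v x)) ->
  (forall x, is_lub (fun r => exists v, F v /\ r = v x) (s x)) ->
  signed_measure add s.
Proof.
  intros HF Hdir Hs a b c Hab. apply Rle_antisym.
  - apply (is_lub_least _ _ _ (Hs c)). intros r [v [Hv ->]].
    rewrite (HF v Hv _ _ _ Hab).
    assert (v a <= s a) by (apply (is_lub_ub _ _ _ (Hs a)); eauto).
    assert (v b <= s b) by (apply (is_lub_ub _ _ _ (Hs b)); eauto). lra.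
  - enough (s a <= s c - s b) by lra.
    apply (is_lub_least _ _ _ (Hs a)). intros r [v1 [Hv1 ->]].
    enough (s b <= s c - v1 a) by lra.
    apply (is_lub_least _ _ _ (Hs b)). intros r [v2 [Hv2 ->]].
    destruct (Hdir v1 v2 Hv1 Hv2) as [v [Hv [H1 H2]]].
    assert (v c <= s c) by (apply (is_lub_ub _ _ _ (Hs c)); eauto).
    rewrite (HF v Hv _ _ _ Hab) in H.
    pose proof (H1 a). pose proof (H2 b). lra.
Qed.

Definition family (n : nat) (ms : nat -> E -> R) : (E -> R) -> Prop :=
  fun m => exists i, (i < n)%nat /\ m = ms i.

Lemma family_oppf n ms m :
  family n (fun i => oppf (ms i)) m <-> family n ms (oppf m).
Proof.
  split.
  - intros [i [Hi ->]]. exists i. split; auto. apply oppf_involutive.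
  - intros [i [Hi Hm]]. exists i. split; auto. now rewrite <- Hm, oppf_involutive.
Qed.

Lemma is_sup_J_family_1 ms : inJ add (ms 0%nat) -> is_sup_J add (family 1 ms) (ms 0%nat).
Proof.
  intro J0. split; [exact J0|split].
  - intros m [i [Hi ->]]. replace i with 0%nat by lia.
    apply le_plus_refl, inJ_signed_measure, J0.
  - intros u _ Uu. apply Uu. exists 0%nat. split; auto.
Qed.

Lemma is_sup_J_family_S n ms s j :
  is_sup_J add (family n ms) s ->
  is_sup_J add (fun m => m = s \/ m = ms n) j ->
  is_sup_J add (family (S n) ms) j.
Proof.
  intros [Js [Us Ls]] [Jj [Uj Lj]]. split; [exact Jj|split].
  - intros m [i [Hi ->]]. destruct (Nat.eq_dec i n) as [->|Hne].
    + apply Uj. now right.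
    + apply (le_plus_trans _ s); [apply Us; exists i; split; auto; lia | apply Uj; now left].
  - intros u Ju Uu. apply Lj; auto. intros m [->| ->].
    + apply Ls; auto. intros m [i [Hi ->]]. apply Uu. exists i. split; auto.
    + apply Uu. exists n. split; auto.
Qed.

End SignedMeasures.

Section RieszDecomposition.
Context {E : Type} (add : E -> E -> option E) (zero one : E).
Hypothesis HE : is_PEA add zero one.
Hypothesis Hrdp : RDP add.

Lemma add_reassoc_r a b c ab s : add a b = Some ab -> add ab c = Some s ->
  exists bc, add b c = Some bc /\ add a bc = Some s.
Proof.
  intros Hab Hs. destruct HE as [Hassoc _]. specialize (Hassoc a b c).
  rewrite Hab in Hassoc. simpl in Hassoc. rewrite Hs in Hassoc.
  destruct (add b c) as [bc|]; simpl in Hassoc; [eauto|discriminate].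
Qed.

Lemma add_reassoc_l a b c bc s : add b c = Some bc -> add a bc = Some s ->
  exists ab, add a b = Some ab /\ add ab c = Some s.
Proof.
  intros Hbc Hs. destruct HE as [Hassoc _]. specialize (Hassoc a b c).
  rewrite Hbc in Hassoc. simpl in Hassoc. rewrite Hs in Hassoc.
  destruct (add a b) as [ab|]; simpl in Hassoc; [eauto|discriminate].
Qed.

Lemma add_zero_one : add zero one = Some one.
Proof.
  destruct HE as [_ [Hcompl [_ Hone]]]. destruct (Hcompl one) as [_ [e [He _]]].
  replace zero with e by (apply Hone; right; eauto). exact He.
Qed.

Lemma add_one_zero : add one zero = Some one.
Proof.
  destruct HE as [_ [Hcompl [_ Hone]]]. destruct (Hcompl one) as [[d [Hd _]] _].
  replace zero with d by (apply Hone; left; eauto). exact Hd.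
Qed.

(* If [e + b = 1] then [e + (b + 0) = 1], and [b + 0 = b] by uniqueness of the right
   complement of [e]; symmetrically for [0 + b]. *)
Lemma add_zero_r b : add b zero = Some b.
Proof.
  pose proof HE as [_ [Hcompl _]]. destruct (Hcompl b) as [_ [e [He _]]].
  destruct (add_reassoc_r _ _ _ _ _ He add_one_zero) as [t [Hbt Het]].
  destruct (Hcompl e) as [[d [_ Huniq]] _].
  assert (t = b) by (rewrite <- (Huniq t Het); exact (Huniq b He)). subst t. exact Hbt.
Qed.

Lemma add_zero_l b : add zero b = Some b.
Proof.
  pose proof HE as [_ [Hcompl _]]. destruct (Hcompl b) as [[d [Hd _]] _].
  destruct (add_reassoc_l _ _ _ _ _ Hd add_zero_one) as [t [Htb Htd]].
  destruct (Hcompl d) as [_ [e [_ Huniq]]].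
  assert (t = b) by (rewrite <- (Huniq t Htd); exact (Huniq b Hd)). subst t. exact Htb.
Qed.

Lemma signed_measure_zero m : signed_measure add m -> m zero = 0.
Proof. intro Hm. pose proof (Hm _ _ _ (add_zero_l zero)). lra. Qed.

(* From [(a + b) + (c + d) = s], axiom (iii) moves [c] to the left of [b] as some [c']
   with [c' + b = b + c], giving [s = (a + c') + (b + d)]. *)
Lemma add_interchange a b c d x y s :
  add a b = Some x -> add c d = Some y -> add x y = Some s ->
  exists p w, add p w = Some s /\
    (forall m, signed_measure add m -> m p = m a + m c) /\
    (forall m, signed_measure add m -> m w = m b + m d).
Proof.
  intros Hab Hcd Hxy.
  destruct (add_reassoc_r _ _ _ _ _ Hab Hxy) as [t [Hby Hat]].
  destruct (add_reassoc_l _ _ _ _ _ Hcd Hby) as [u [Hbc Hud]].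
  pose proof HE as [_ [_ [Hswap _]]].
  destruct (Hswap _ _ _ Hbc) as [c' [_ [Hc'b _]]].
  destruct (add_reassoc_r _ _ _ _ _ Hc'b Hud) as [w [Hbd Hc'w]].
  destruct (add_reassoc_l _ _ _ _ _ Hc'w Hat) as [p [Hac' Hpw]].
  exists p, w. split; [exact Hpw|split]; intros m Hm.
  - pose proof (Hm _ _ _ Hbc). pose proof (Hm _ _ _ Hc'b).
    rewrite (Hm _ _ _ Hac'). lra.
  - exact (Hm _ _ _ Hbd).
Qed.

Definition decomp2_values (m1 m2 : E -> R) (x : E) : R -> Prop :=
  fun r => exists a b, add a b = Some x /\ r = m1 a + m2 b.

Lemma signed_measure_decomp2_sup m1 m2 j :
  signed_measure add m1 -> signed_measure add m2 ->
  (forall x, is_lub (decomp2_values m1 m2 x) (j x)) -> signed_measure add j.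
Proof.
  intros H1 H2 Hj x y s Hxy. apply Rle_antisym.
  - apply (is_lub_least _ _ _ (Hj s)). intros r [u [v [Huv ->]]].
    destruct (Hrdp _ _ _ _ _ Huv Hxy) as [d1 [d2 [d3 [d4 [Hu [Hv [Hx Hy]]]]]]].
    rewrite (H1 _ _ _ Hu), (H2 _ _ _ Hv).
    assert (m1 d1 + m2 d3 <= j x) by (apply (is_lub_ub _ _ _ (Hj x)); exists d1, d3; auto).
    assert (m1 d2 + m2 d4 <= j y) by (apply (is_lub_ub _ _ _ (Hj y)); exists d2, d4; auto).
    lra.
  - enough (j x <= j s - j y) by lra.
    apply (is_lub_least _ _ _ (Hj x)). intros r [a [b [Hab ->]]].
    enough (j y <= j s - (m1 a + m2 b)) by lra.
    apply (is_lub_least _ _ _ (Hj y)). intros r [c [d [Hcd ->]]].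
    destruct (add_interchange _ _ _ _ _ _ _ Hab Hcd Hxy) as [p [w [Hpw [Hp Hw]]]].
    assert (m1 p + m2 w <= j s) by (apply (is_lub_ub _ _ _ (Hj s)); exists p, w; auto).
    rewrite (Hp _ H1), (Hw _ H2) in H. lra.
Qed.

Lemma join2_exists m1 m2 : inJ add m1 -> inJ add m2 ->
  exists j, is_sup_J add (fun m => m = m1 \/ m = m2) j /\
    forall x, is_lub (decomp2_values m1 m2 x) (j x).
Proof.
  intros J1 J2. pose proof (inJ_signed_measure _ _ J1) as S1.
  pose proof (inJ_signed_measure _ _ J2) as S2.
  destruct (pointwise_lub_exists (decomp2_values m1 m2)) as [j Hj].
  { intro x. destruct (inJ_summand_bound _ _ J1) as [p1 [_ Hp1]].
    destruct (inJ_summand_bound _ _ J2) as [p2 [_ Hp2]].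
    exists (p1 x + p2 x). intros r [a [b [Hab ->]]].
    destruct (Hp1 _ _ _ Hab), (Hp2 _ _ _ Hab). lra. }
  { intro x. exists (m1 x + m2 zero), x, zero. split; auto. apply add_zero_r. }
  pose proof (signed_measure_decomp2_sup _ _ _ S1 S2 Hj) as Sj.
  assert (L1 : le_plus add m1 j).
  { apply le_plus_of_le; auto. intro x. apply (is_lub_ub _ _ _ (Hj x)).
    exists x, zero. split; [apply add_zero_r|]. rewrite (signed_measure_zero _ S2). lra. }
  assert (L2 : le_plus add m2 j).
  { apply le_plus_of_le; auto. intro x. apply (is_lub_ub _ _ _ (Hj x)).
    exists zero, x. split; [apply add_zero_l|]. rewrite (signed_measure_zero _ S1). lra. }
  exists j. split; [|exact Hj]. split; [apply (inJ_of_le_plus _ m1); auto|split].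
  - intros m [-> | ->]; auto.
  - intros u Ju Uu. pose proof (inJ_signed_measure _ _ Ju) as Su.
    apply le_plus_of_le; auto. intro x.
    apply (is_lub_least _ _ _ (Hj x)). intros r [a [b [Hab ->]]]. rewrite (Su _ _ _ Hab).
    pose proof (le_plus_le _ _ _ (Uu m1 (or_introl eq_refl)) a).
    pose proof (le_plus_le _ _ _ (Uu m2 (or_intror eq_refl)) b). lra.
Qed.

Lemma sumE_ext xs ys n : (forall i, (i < n)%nat -> xs i = ys i) ->
  sumE add zero xs n = sumE add zero ys n.
Proof.
  induction n as [|n IH]; intro H; simpl; auto.
  rewrite IH by (intros; apply H; lia). now rewrite H by lia.
Qed.

Lemma rsum_ext f g n : (forall i, (i < n)%nat -> f i = g i) -> rsum f n = rsum g n.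
Proof.
  induction n as [|n IH]; intro H; simpl; auto.
  rewrite IH by (intros; apply H; lia). now rewrite H by lia.
Qed.

Lemma decomp_values_1 ms x r : decomp_values add zero ms 1 x r <-> r = ms 0%nat x.
Proof.
  unfold decomp_values. simpl. split.
  - intros [xs [Hx ->]]. rewrite add_zero_l in Hx. injection Hx as ->. lra.
  - intros ->. exists (fun _ => x). rewrite add_zero_l. split; auto. lra.
Qed.

Lemma decomp_values_S ms n x r :
  decomp_values add zero ms (S n) x r <->
  exists a b, add a b = Some x /\
    exists v, decomp_values add zero ms n a v /\ r = v + ms n b.
Proof.
  split.
  - intros [xs [Hx ->]]. simpl in Hx.
    destruct (sumE add zero xs n) as [a|] eqn:Ha; simpl in Hx; [|discriminate].
    exists a, (xs n). split; auto. exists (rsum (fun i => ms i (xs i)) n). split; auto.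
    exists xs. split; auto.
  - intros [a [b [Hab [v [[xs [Ha ->]] ->]]]]].
    set (ys := fun i => if Nat.eqb i n then b else xs i).
    assert (Hys : forall i, (i < n)%nat -> xs i = ys i).
    { intros i Hi. unfold ys. destruct (Nat.eqb_spec i n); [lia|reflexivity]. }
    assert (Hyn : ys n = b) by (unfold ys; now rewrite Nat.eqb_refl).
    exists ys. simpl. rewrite <- (sumE_ext _ _ _ Hys), Ha, Hyn. split; auto.
    rewrite (rsum_ext _ (fun i => ms i (ys i)) _ (fun i Hi => f_equal _ (Hys i Hi))).
    reflexivity.
Qed.

Lemma joinN_exists n ms : (forall i, (i < S n)%nat -> inJ add (ms i)) ->
  exists s, is_sup_J add (family (S n) ms) s /\
    forall x, is_lub (decomp_values add zero ms (S n) x) (s x).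
Proof.
  induction n as [|n IH]; intro HJ.
  - exists (ms 0%nat). split; [apply is_sup_J_family_1, HJ; lia|].
    intro x. apply (is_lub_ext (fun r => r = ms 0%nat x)); [|apply is_lub_singleton].
    intro r. symmetry. apply decomp_values_1.
  - destruct (IH (fun i Hi => HJ i ltac:(lia))) as [s [Hs Hsx]].
    destruct (join2_exists s (ms (S n))) as [j [Hj Hjx]];
      [exact (proj1 Hs) | apply HJ; lia |].
    exists j. split; [exact (is_sup_J_family_S _ _ _ _ _ Hs Hj)|].
    intro x. apply (is_lub_ext _ _ _ (fun r => iff_sym (decomp_values_S ms (S n) x r))).
    exact (is_lub_nested _ _ _ _ _ Hsx (Hjx x)).
Qed.

Lemma rsum_opp f n : rsum (fun i => - f i) n = - rsum f n.
Proof. induction n as [|n IH]; simpl; [lra|]. rewrite IH. lra. Qed.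

Lemma decomp_values_oppf ms n x r :
  decomp_values add zero (fun i => oppf (ms i)) n x r <->
  decomp_values add zero ms n x (- r).
Proof.
  unfold decomp_values, oppf.
  split; intros [xs [Hx Hr]]; exists xs; split; auto;
    pose proof (rsum_opp (fun i => ms i (xs i)) n); simpl in *; lra.
Qed.

Lemma meetN_exists n ms : (forall i, (i < S n)%nat -> inJ add (ms i)) ->
  exists s, is_inf_J add (family (S n) ms) s /\
    forall x, is_glb (decomp_values add zero ms (S n) x) (s x).
Proof.
  intro HJ.
  destruct (joinN_exists n (fun i => oppf (ms i))) as [t [Ht Htx]].
  { intros i Hi. apply inJ_oppf, HJ, Hi. }
  exists (oppf t). split.
  - apply is_inf_J_of_sup_oppf. exact (is_sup_J_ext _ _ _ _ (family_oppf _ _) Ht).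
  - intro x. apply is_glb_of_lub_opp.
    exact (is_lub_ext _ _ _ (decomp_values_oppf ms (S n) x) (Htx x)).
Qed.

Inductive join_closure (S : (E -> R) -> Prop) : (E -> R) -> Prop :=
  | join_closure_base m : S m -> join_closure S m
  | join_closure_join m1 m2 j : join_closure S m1 -> join_closure S m2 ->
      is_sup_J add (fun m => m = m1 \/ m = m2) j -> join_closure S j.

Lemma join_closure_inJ S :
  (forall m, S m -> inJ add m) -> forall m, join_closure S m -> inJ add m.
Proof. intros HJ m Hm. destruct Hm as [m Hm | m1 m2 j _ _ [Jj _]]; auto. Qed.

Lemma join_closure_le_plus S u : (forall m, S m -> le_plus add m u) -> inJ add u ->
  forall m, join_closure S m -> le_plus add m u.
Proof.
  intros Uu Ju m Hm. induction Hm as [m Hm | m1 m2 j _ IH1 _ IH2 [_ [_ Lj]]]; auto.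
  apply Lj; auto. intros m [-> | ->]; auto.
Qed.

Lemma dedekind_sup S : (forall m, S m -> inJ add m) -> (exists m, S m) ->
  (exists u, inJ add u /\ forall m, S m -> le_plus add m u) ->
  exists s, is_sup_J add S s.
Proof.
  intros HJ [m0 Hm0] [u [Ju Uu]].
  pose proof (join_closure_inJ S HJ) as CJ. pose proof (join_closure_le_plus S u Uu Ju) as CU.
  destruct (pointwise_lub_exists (fun x r => exists v, join_closure S v /\ r = v x))
    as [s Hs].
  { intro x. exists (u x). intros r [v [Hv ->]]. apply (le_plus_le add), CU, Hv. }
  { intro x. exists (m0 x), m0. split; auto. now constructor. }
  assert (Ss : signed_measure add s).
  { apply (signed_measure_directed_sup _ (join_closure S)); [| |exact Hs].
    - intros v Hv. apply inJ_signed_measure, CJ, Hv.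
    - intros v1 v2 Hv1 Hv2.
      destruct (join2_exists v1 v2 (CJ _ Hv1) (CJ _ Hv2)) as [j [Hj _]].
      exists j. split; [exact (join_closure_join _ _ _ _ Hv1 Hv2 Hj)|].
      destruct Hj as [_ [Uj _]].
      split; apply (le_plus_le add), Uj; auto. }
  assert (Us : forall m, S m -> le_plus add m s).
  { intros m Hm. apply le_plus_of_le; auto.
    - apply inJ_signed_measure, HJ, Hm.
    - intro x. apply (is_lub_ub _ _ _ (Hs x)). exists m. split; auto. now constructor. }
  exists s. split; [apply (inJ_of_le_plus _ m0); auto|split; auto].
  intros w Jw Uw. apply le_plus_of_le; auto; [apply inJ_signed_measure, Jw|].
  intro x. apply (is_lub_least _ _ _ (Hs x)). intros r [v [Hv ->]].
  apply (le_plus_le add). exact (join_closure_le_plus S w Uw Jw v Hv).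
Qed.

Lemma dedekind_inf S : (forall m, S m -> inJ add m) -> (exists m, S m) ->
  (exists l, inJ add l /\ forall m, S m -> le_plus add l m) ->
  exists s, is_inf_J add S s.
Proof.
  intros HJ [m0 Hm0] [l [Jl Ll]].
  destruct (dedekind_sup (fun m => S (oppf m))) as [t Ht].
  - intros m Hm. rewrite <- (oppf_involutive m). apply inJ_oppf, HJ, Hm.
  - exists (oppf m0). now rewrite oppf_involutive.
  - exists (oppf l). split; [apply inJ_oppf, Jl|]. intros m Hm.
    rewrite <- (oppf_involutive m) at 1. apply le_plus_oppf, Ll, Hm.
  - exists (oppf t). apply is_inf_J_of_sup_oppf, Ht.
Qed.

End RieszDecomposition.
Theorem theorem3p6 (E : Type) (add : E -> E -> option E) (zero one : E)
  (HE : is_PEA add zero one) (Hrdp : RDP add) :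
  (* J(E) is a real vector space under pointwise operations *)
  (inJ add (fun _ => 0)) /\
  (forall m1 m2, inJ add m1 -> inJ add m2 -> inJ add (fun x => m1 x + m2 x)) /\
  (forall (c : R) m, inJ add m -> inJ add (fun x => c * m x)) /\
  (* <=+ is a partial order on J(E) *)
  (forall m, inJ add m -> le_plus add m m) /\
  (forall m1 m2, inJ add m1 -> inJ add m2 ->
     le_plus add m1 m2 -> le_plus add m2 m1 -> forall x, m1 x = m2 x) /\
  (forall m1 m2 m3, inJ add m1 -> inJ add m2 -> inJ add m3 ->
     le_plus add m1 m2 -> le_plus add m2 m3 -> le_plus add m1 m3) /\
  (* compatible with the vector space operations *)
  (forall m1 m2 m3, inJ add m1 -> inJ add m2 -> inJ add m3 ->
     le_plus add m1 m2 ->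
     le_plus add (fun x => m1 x + m3 x) (fun x => m2 x + m3 x)) /\
  (forall (c : R) m1 m2, inJ add m1 -> inJ add m2 -> 0 <= c ->
     le_plus add m1 m2 -> le_plus add (fun x => c * m1 x) (fun x => c * m2 x)) /\
  (* Dedekind completeness *)
  (forall S : (E -> R) -> Prop, (forall m, S m -> inJ add m) -> (exists m, S m) ->
     (exists u, inJ add u /\ forall m, S m -> le_plus add m u) ->
     exists s, is_sup_J add S s) /\
  (forall S : (E -> R) -> Prop, (forall m, S m -> inJ add m) -> (exists m, S m) ->
     (exists l, inJ add l /\ forall m, S m -> le_plus add l m) ->
     exists s, is_inf_J add S s) /\
  (* lattice: finite joins/meets exist and are given by the formulas *)
  (forall (n : nat) (ms : nat -> E -> R), (1 <= n)%nat ->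
     (forall i, (i < n)%nat -> inJ add (ms i)) ->
     (exists s, is_sup_J add (fun m => exists i, (i < n)%nat /\ m = ms i) s) /\
     (exists s, is_inf_J add (fun m => exists i, (i < n)%nat /\ m = ms i) s) /\
     (forall s, is_sup_J add (fun m => exists i, (i < n)%nat /\ m = ms i) s ->
        forall x, is_lub (decomp_values add zero ms n x) (s x)) /\
     (forall s, is_inf_J add (fun m => exists i, (i < n)%nat /\ m = ms i) s ->
        forall x, is_glb (decomp_values add zero ms n x) (s x))).
Proof.
  split; [exact (inJ_zero add)|].
  split; [exact (inJ_add add)|].
  split; [exact (inJ_scale add)|].
  split; [intros m Hm; exact (le_plus_refl add m (inJ_signed_measure add m Hm))|].
  split; [intros m1 m2 _ _; exact (le_plus_antisym add m1 m2)|].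
  split; [intros m1 m2 m3 _ _ _; exact (le_plus_trans add m1 m2 m3)|].
  split; [intros m1 m2 m3 _ _ _; exact (le_plus_add_r add m1 m2 m3)|].
  split; [intros c m1 m2 _ _; exact (le_plus_scale add c m1 m2)|].
  split; [exact (dedekind_sup add zero one HE Hrdp)|].
  split; [exact (dedekind_inf add zero one HE Hrdp)|].
  intros n ms Hn HJ. destruct n as [|n]; [lia|].
  destruct (joinN_exists add zero one HE Hrdp n ms HJ) as [j [Hj Hjx]].
  destruct (meetN_exists add zero one HE Hrdp n ms HJ) as [k [Hk Hkx]].
  split; [now exists j|]. split; [now exists k|]. split.
  - intros s Hs x. rewrite (is_sup_J_unique add _ _ _ Hs Hj x). apply Hjx.
  - intros s Hs x. rewrite (is_inf_J_unique add _ _ _ Hs Hk x). apply Hkx.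
Qed.
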